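(* Let $\mathscr{H}$ be a complex Hilbert space and $A\in\mathbb{B}(\mathscr{H})$. Then $$w^2(A)\leq\frac{1}{4}\, w^2\left(|A|+i|A^*|\right)+\frac{1}{8}\left\||A|^2+|A^*|^2\right\|+\frac{1}{4}\,w\left(|A||A^*|\right).$$
   Context: $\mathbb{B}(\mathscr{H})$ denotes the algebra of bounded linear operators on $\mathscr{H}$; $\|\cdot\|$ is the operator norm. For $T\in\mathbb{B}(\mathscr{H})$, $|T|=(T^*T)^{1/2}$ is the positive square root of $T^*T$, and $w(T)=\sup\{|\langle Tx,x\rangle|: x\in\mathscr{H},\ \|x\|=1\}$ is the numerical radius. *)

From HB Require Import structures.
From mathcomp Require Import all_boot all_order all_algebra.
From mathcomp Require Import all_classical all_reals.
From mathcomp.real_closed Require Import complex.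
Set Implicit Arguments. Unset Strict Implicit. Unset Printing Implicit Defensive.
Import Order.TTheory GRing.Theory Num.Theory.
Local Open Scope ring_scope.
Local Open Scope complex_scope.

Section Hilbert.
Variable R : realType.
Variable V : lmodType R[i].
Variable ip : V -> V -> R[i].

Definition is_inner_product : Prop :=
  [/\ (forall (a : R[i]) (x y z : V), ip (a *: x + y) z = a * ip x z + ip y z),
      (forall x y : V, ip y x = conjc (ip x y)),
      (forall x : V, 0 <= ip x x) &
      (forall x : V, ip x x = 0 -> x = 0)].

Definition hnorm (x : V) : R := Num.sqrt (complex.Re (ip x x)).

Definition is_complete : Prop :=
  forall u : nat -> V,
    (forall e : R, 0 < e -> exists N : nat, forall m n : nat,
        (N <= m)%N -> (N <= n)%N -> hnorm (u m - u n) < e) ->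
    exists l : V, forall e : R, 0 < e -> exists N : nat, forall n : nat,
        (N <= n)%N -> hnorm (u n - l) < e.

Definition is_hilbert : Prop := is_inner_product /\ is_complete.

Definition is_bounded_op (T : V -> V) : Prop :=
  (forall (a : R[i]) (x y : V), T (a *: x + y) = a *: T x + T y) /\
  exists M : R, forall x : V, hnorm (T x) <= M * hnorm x.

Definition is_adjoint (T S : V -> V) : Prop :=
  forall x y : V, ip (T x) y = ip x (S y).

Definition is_positive_op (P : V -> V) : Prop :=
  is_bounded_op P /\ forall x : V, 0 <= ip (P x) x.

(* P is the positive square root of S (unique in a Hilbert space) *)
Definition is_pos_sqrt (P S : V -> V) : Prop :=
  is_positive_op P /\ forall x : V, P (P x) = S x.

Definition opnorm (T : V -> V) : R :=
  sup [set r : R | exists x : V, hnorm x <= 1 /\ r = hnorm (T x)].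

Definition numrad (T : V -> V) : R :=
  sup [set r : R | exists x : V, hnorm x = 1 /\ r = Normc.normc (ip (T x) x)].

End Hilbert.

(* Let P = |A| and Q = |A*|, so that P^2 = A*A and Q^2 = AA*.  For a unit vector x
   put a = <Px,x> and b = <Qx,x>; the theorem is the supremum over such x of
     |<Ax,x>|^2 <= ab = (a^2 + b^2)/4 + ab/2 - (a - b)^2/4,
   where a^2 + b^2 = |<(P + iQ)x,x>|^2 and, by Buzano's inequality applied to Px,
   Qx and x, ab/2 <= ||(P^2 + Q^2)x||/8 + |<PQx,x>|/4.

   The first inequality is the mixed Schwarz inequality |<Ax,y>|^2 <= <Px,x><Qy,y>,
   proved without polar decomposition.  For eps > 0 the operator Q + eps is
   invertible (its inverse is obtained from a contracting iteration, using the
   completeness of the space); Cauchy-Schwarz for the form <(Q+eps).,.> applied to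
   Ax = (Q+eps)(Q+eps)^{-1}Ax reduces the claim to <(Q+eps)^{-1}Ax,Ax> <= <(P+eps)x,x>,
   which is Reid's inequality for the contraction (P+eps)^{-1}A*(Q+eps)^{-1}A,
   symmetric for the form <(P+eps).,.>; finally eps -> 0. *)
From HB Require Import structures.
From mathcomp Require Import all_boot all_order all_algebra.
From mathcomp Require Import all_classical all_reals.
From mathcomp.real_closed Require Import complex.
From mathcomp Require Import ring lra.
Import Order.TTheory GRing.Theory Num.Theory.
Local Open Scope ring_scope.
Local Open Scope complex_scope.
Set Implicit Arguments. Unset Strict Implicit. Unset Printing Implicit Defensive.

Notation cRe := complex.Re.
Notation cIm := complex.Im.

Section RealFacts.
Variable R : realFieldType.

Lemma le_mul_of_quadratic_ge0 (a b n : R) : 0 <= a -> 0 <= b -> 0 <= n ->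
  (forall s, 0 <= a - 2 * s * n + s ^+ 2 * n * b) -> n <= a * b.
Proof.
move=> ha hb hn H.
have [b0|bpos] := eqVneq b 0.
  subst b.
  have [n0|npos] := eqVneq n 0; first by rewrite n0 mulr0.
  have np : 0 < n by rewrite lt_def npos hn.
  have := H ((a + 1) / (2 * n)).
  have -> : 2 * ((a + 1) / (2 * n)) * n = a + 1 by field; rewrite npos.
  rewrite mulr0 addr0; lra.
have bp : 0 < b by rewrite lt_def bpos hb.
have := H b^-1.
have -> : a - 2 * b^-1 * n + b^-1 ^+ 2 * n * b = a - b^-1 * n.
  by field; rewrite bpos.
rewrite subr_ge0 => h.
by have := ler_wpM2r hb h; rewrite mulrAC mulVf // mul1r.
Qed.

Lemma le_of_sqr_le_mul (a b : R) : 0 <= a -> 0 <= b -> a ^+ 2 <= b * a -> a <= b.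
Proof.
move=> ha hb h; have [->|nz] := eqVneq a 0; first by [].
have ap : 0 < a by rewrite lt_def nz ha.
by rewrite -(ler_pM2r ap) -expr2.
Qed.

Lemma le_mul_of_eps (s a b n1 n2 : R) : 0 <= a -> 0 <= b -> 0 <= n1 -> 0 <= n2 ->
  (forall e, 0 < e -> s <= (a + e * n1) * (b + e * n2)) -> s <= a * b.
Proof.
move=> ha hb h1 h2 H; rewrite leNgt; apply/negP => hs.
set K := a * n2 + b * n1 + n1 * n2 + 1.
have Kp : 0 < K by rewrite /K ltr_pwDr // !addr_ge0 ?mulr_ge0.
set d := (s - a * b) / (2 * K).
have dp : 0 < d by rewrite /d divr_gt0 ?subr_gt0 // mulr_gt0.
set e := Num.min 1 d.
have ep : 0 < e by rewrite /e lt_min ltr01 dp.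
have e1 : e <= 1 by rewrite /e ge_min lexx.
have ed : e <= d by rewrite /e ge_min lexx orbT.
have := H e ep.
have -> : (a + e * n1) * (b + e * n2)
    = a * b + e * (a * n2 + b * n1) + e * e * (n1 * n2) by ring.
have ee : e * e * (n1 * n2) <= e * (n1 * n2).
  by rewrite -mulrA ler_piMl ?mulr_ge0 // ltW.
have eK : e * K <= d * K by rewrite ler_pM2r.
have dK : d * K = (s - a * b) / 2 by rewrite /d; field; rewrite gt_eqF.
have : e * (a * n2 + b * n1) + e * (n1 * n2) <= e * K.
  rewrite /K -mulrDr ler_pM2l // -addrA lerDl; lra.
lra.
Qed.

Lemma pow_square_step (u v c a : R) k : 0 < a -> 0 <= u ->
  u ^+ k * a <= v * a ^+ k -> v ^+ 2 <= c * a -> u ^+ (k * 2) * a <= c * a ^+ (k * 2).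
Proof.
move=> ap u0 huv hv.
have l0 : 0 <= u ^+ k * a by rewrite mulr_ge0 ?exprn_ge0 // ltW.
have := ler_pM l0 l0 huv huv; rewrite -!expr2 !exprMn => h.
have h2 : v ^+ 2 * (a ^+ k) ^+ 2 <= c * a * (a ^+ k) ^+ 2.
  by apply: ler_wpM2r; rewrite ?sqr_ge0.
have := le_trans h h2.
rewrite -!exprM expr2 mulrA [c * a * _]mulrAC -mulrA [a * _]mulrC mulrA.
by rewrite ler_pM2r.
Qed.

End RealFacts.

Section ArchiFacts.
Variable R : archiRealFieldType.

Lemma bernoulli_ineq (r : R) n : 0 <= r -> 1 + n%:R * r <= (1 + r) ^+ n.
Proof.
move=> hr; elim: n => [|n IH]; first by rewrite expr0 mul0r addr0.
have h1 : 0 <= 1 + r by rewrite addr_ge0.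
have h2 : 0 <= n%:R * r * r by rewrite !mulr_ge0 ?ler0n.
have := ler_wpM2l h1 IH; rewrite exprS -natr1.
have -> : (1 + r) * (1 + n%:R * r) = 1 + (n%:R + 1) * r + n%:R * r * r by ring.
lra.
Qed.

Lemma geometric_small (q d : R) : 0 <= q -> q < 1 -> 0 < d ->
  exists N, forall n, (N <= n)%N -> q ^+ n < d.
Proof.
move=> q0 q1 d0.
suff [N hN] : exists N, q ^+ N < d.
  exists N => n hn; apply: le_lt_trans hN.
  by rewrite -(subnKC hn) exprD ler_piMr ?exprn_ge0 // exprn_ile1 // ltW.
have [->|qn0] := eqVneq q 0; first by exists 1%N; rewrite expr1.
have qp : 0 < q by rewrite lt_def qn0 q0.
set r := q^-1 - 1.
have rp : 0 < r by rewrite /r subr_gt0 invf_gt1.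
have hb : 0 <= (d * r)^-1 by rewrite invr_ge0 mulr_ge0 // ltW.
set N := Num.Def.archi_bound (d * r)^-1.
exists N.
have dN : d^-1 < N%:R * r.
  have := ltr_pM2r rp (d * r)^-1 N%:R; rewrite archi_boundP // => /esym.
  by rewrite invfM -mulrA mulVf ?gt_eqF // mulr1.
have := bernoulli_ineq N (ltW rp).
rewrite (_ : 1 + r = q^-1); last by rewrite /r addrC subrK.
rewrite exprVn => hB.
have : d^-1 < (q ^+ N)^-1 by apply: (lt_le_trans dN); apply: le_trans hB; lra.
by rewrite ltf_pV2 ?posrE ?exprn_gt0.
Qed.

(* If  g^n a <= B a^n  for arbitrarily large n, with a > 0, then g <= a:
   otherwise (a/g)^n would tend to 0 while staying above a/B. *)
Lemma le_of_pow_bounded (g a B : R) : 0 < a ->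
  (forall m, exists2 n, (m <= n)%N & g ^+ n * a <= B * a ^+ n) -> g <= a.
Proof.
move=> ap H; rewrite leNgt; apply/negP => ag.
have gp : 0 < g := lt_trans ap ag.
have [n0 _ h0] := H 0%N.
have Bp : 0 < B.
  have : 0 < B * a ^+ n0 by apply: lt_le_trans h0; rewrite mulr_gt0 ?exprn_gt0.
  by rewrite pmulr_lgt0 ?exprn_gt0.
have [q0 q1] : 0 <= a / g /\ a / g < 1.
  by rewrite divr_ge0 ?ltW // ltr_pdivrMr // mul1r.
have [N hN] := geometric_small q0 q1 (divr_gt0 ap Bp).
have [n hn hgn] := H N.
have gnp : 0 < B * g ^+ n by rewrite mulr_gt0 ?exprn_gt0.
have : (a / g) ^+ n * (B * g ^+ n) < a / B * (B * g ^+ n) by rewrite ltr_pM2r // hN.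
rewrite expr_div_n.
have -> : a ^+ n / g ^+ n * (B * g ^+ n) = B * a ^+ n.
  by field; rewrite expf_neq0 ?gt_eqF.
have -> : a / B * (B * g ^+ n) = g ^+ n * a by field; rewrite gt_eqF.
by rewrite ltNge hgn.
Qed.

End ArchiFacts.

Section ComplexModulus.
Variable R : rcfType.
Implicit Types (z : R[i]) (r : R).

Definition modc2 z : R := cRe z ^+ 2 + cIm z ^+ 2.

Lemma modc2_ge0 z : 0 <= modc2 z.
Proof. by rewrite /modc2 addr_ge0 // sqr_ge0. Qed.

Lemma modc2_real r : modc2 r%:C = r ^+ 2.
Proof. by rewrite /modc2 /= expr0n /= addr0. Qed.

Lemma modc2J z : modc2 z^* = modc2 z.
Proof. by case: z => p q; rewrite /modc2 /= sqrrN. Qed.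

Lemma Re_sqr_le_modc2 z : cRe z ^+ 2 <= modc2 z.
Proof. by rewrite /modc2 lerDl sqr_ge0. Qed.

Lemma normcE z : Normc.normc z = Num.sqrt (modc2 z).
Proof. by case: z. Qed.

Lemma normc_ge0 z : 0 <= Normc.normc z.
Proof. by rewrite normcE sqrtr_ge0. Qed.

Lemma normc_sqr z : Normc.normc z ^+ 2 = modc2 z.
Proof. by rewrite normcE sqr_sqrtr ?modc2_ge0. Qed.

Lemma normcJ z : Normc.normc z^* = Normc.normc z.
Proof. by rewrite !normcE modc2J. Qed.

Lemma normc_real r : Normc.normc r%:C = `|r|.
Proof. by rewrite normcE modc2_real sqrtr_sqr. Qed.

Lemma Re_le_normc z : cRe z <= Normc.normc z.
Proof.
apply: le_trans (ler_norm _) _.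
by rewrite normcE -sqrtr_sqr ler_sqrt ?modc2_ge0 // Re_sqr_le_modc2.
Qed.

Lemma ge0_complex_real z : 0 <= z -> z = (cRe z)%:C /\ 0 <= cRe z.
Proof. by case: z => a b; rewrite lecE /= => /andP[/eqP-> ha]. Qed.

Lemma ReD z1 z2 : cRe (z1 + z2) = cRe z1 + cRe z2.
Proof. by case: z1; case: z2. Qed.

Lemma ReN z : cRe (- z) = - cRe z.
Proof. by case: z. Qed.

Lemma ReJ z : cRe z^* = cRe z.
Proof. by case: z. Qed.

Lemma Re_realM r z : cRe (r%:C * z) = r * cRe z.
Proof. by case: z => p q; simpc. Qed.

Lemma Re_conj_realM r z : cRe (r%:C^* * z) = r * cRe z.
Proof. by case: z => p q; simpc. Qed.

End ComplexModulus.

Section HermitianForm.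
Variables (R : rcfType) (V : lmodType R[i]).

Definition hermitian_form (f : V -> V -> R[i]) : Prop :=
  [/\ (forall (a : R[i]) (x y z : V), f (a *: x + y) z = a * f x z + f y z),
      (forall x y : V, f y x = (f x y)^*) &
      (forall x : V, 0 <= f x x)].

Variable f : V -> V -> R[i].
Hypothesis hf : hermitian_form f.

Lemma form0l z : f 0 z = 0.
Proof.
case: hf => L _ _; have := L 1 0 0 z; rewrite scale1r addr0 mul1r => h.
by apply: (addrI (f 0 z)); rewrite addr0 -h.
Qed.

Lemma formDl x y z : f (x + y) z = f x z + f y z.
Proof. by case: hf => L _ _; rewrite -{1}[x]scale1r L mul1r. Qed.

Lemma formZl a x z : f (a *: x) z = a * f x z.
Proof. by case: hf => L _ _; rewrite -[a *: x]addr0 L form0l addr0. Qed.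

Lemma formNl x z : f (- x) z = - f x z.
Proof. by rewrite -scaleN1r formZl mulN1r. Qed.

Lemma formC x y : f y x = (f x y)^*.
Proof. by case: hf. Qed.

Lemma formDr x y z : f z (x + y) = f z x + f z y.
Proof. by rewrite formC formDl rmorphD (formC x z) (formC y z). Qed.

Lemma formZr a x z : f z (a *: x) = a^* * f z x.
Proof. by rewrite formC formZl rmorphM (formC x z). Qed.

Lemma formNr x z : f z (- x) = - f z x.
Proof. by rewrite formC formNl rmorphN (formC x z). Qed.

Lemma formBr x y z : f z (x - y) = f z x - f z y.
Proof. by rewrite formDr formNr. Qed.

Lemma form_diag x : f x x = (cRe (f x x))%:C.
Proof. by case: hf => _ _ P; case: (ge0_complex_real (P x)). Qed.

Lemma form_diag_ge0 x : 0 <= cRe (f x x).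
Proof. by case: hf => _ _ P; case: (ge0_complex_real (P x)). Qed.

Lemma form_expand x y c : f (x + c *: y) (x + c *: y)
  = f x x + c^* * f x y + c * f y x + c * c^* * f y y.
Proof. rewrite !formDl !formDr !formZl !formZr; ring. Qed.

(* Cauchy-Schwarz: |f(x,y)|^2 <= f(x,x) f(y,y), from nonnegativity of
   f(x - s f(x,y) y, x - s f(x,y) y) for every real s. *)
Lemma form_CS x y : modc2 (f x y) <= cRe (f x x) * cRe (f y y).
Proof.
apply: le_mul_of_quadratic_ge0; rewrite ?form_diag_ge0 ?modc2_ge0 // => s.
have := form_diag_ge0 (x + (- (s%:C * f x y)) *: y).
rewrite form_expand (formC x y) (form_diag x) (form_diag y).
case: (f x y) => p q; rewrite /modc2 /=.
move: (cRe (f x x)) (cRe (f y y)) => a b.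
by simpc => /= h; lra.
Qed.

End HermitianForm.

Section Reid.
Variables (R : realType) (V : lmodType R[i]) (f : V -> V -> R[i]) (S : V -> V).
Hypothesis hf : hermitian_form f.
Hypothesis S_sym : forall x y, f (S x) y = f x (S y).

Lemma iter_sym k x y : f (iter k S x) y = f x (iter k S y).
Proof. by elim: k x y => [//|k IH] x y; rewrite iterS S_sym IH iterSr. Qed.

Variable z : V.

(* g m = Re f(S^(2^m) z, z);  Cauchy-Schwarz and symmetry of S give
   g(m)^2 <= g(m+1) f(z,z). *)
Let g m := cRe (f (iter (2 ^ m) S z) z).

Lemma reid_diag m : cRe (f (iter (2 ^ m) S z) (iter (2 ^ m) S z)) = g m.+1.
Proof. by rewrite /g -iter_sym -iterD expnS mul2n -addnn. Qed.

Lemma reid_step m : g m ^+ 2 <= g m.+1 * cRe (f z z).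
Proof.
rewrite -reid_diag; apply: le_trans (Re_sqr_le_modc2 _) _.
exact: form_CS.
Qed.

Lemma reid B : 0 <= cRe (f (S z) z) ->
  (forall k, cRe (f (iter k S z) (iter k S z)) <= B) ->
  cRe (f (S z) z) <= cRe (f z z).
Proof.
rewrite -[S z]/(iter (2 ^ 0) S z) -/(g 0) => g0 hB.
set a := cRe (f z z).
have a0 : 0 <= a := form_diag_ge0 hf z.
have [az|anz] := eqVneq a 0.
  have := reid_step 0; rewrite -/a az mulr0 => h.
  have : g 0 ^+ 2 == 0 by rewrite eq_le h sqr_ge0.
  by rewrite sqrf_eq0 => /eqP ->.
have ap : 0 < a by rewrite lt_def anz a0.
have gpow m : g 0 ^+ (2 ^ m) * a <= g m * a ^+ (2 ^ m).
  elim: m => [|m IH]; first by rewrite expn0 !expr1 mulrC.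
  by rewrite expnSr; apply: pow_square_step (reid_step m).
apply: (le_of_pow_bounded (B := B)) => // m.
exists (2 ^ m * 2)%N.
  exact: leq_trans (ltnW (ltn_expl m (isT : (1 < 2)%N))) (leq_pmulr _ _).
apply: pow_square_step (gpow m) _ => //.
apply: le_trans (reid_step m) _; rewrite ler_wpM2r // -reid_diag; exact: hB.
Qed.

End Reid.

Section InnerProduct.
Variables (R : realType) (V : lmodType R[i]) (ip : V -> V -> R[i]).
Hypothesis hip : is_inner_product ip.
Implicit Types (x y u v : V).

Lemma ip_herm : hermitian_form ip.
Proof. by case: hip => L C P _; split. Qed.

Definition sqn x := cRe (ip x x).

Lemma sqnE x : ip x x = (sqn x)%:C.
Proof. exact: form_diag ip_herm x. Qed.

Lemma sqn_ge0 x : 0 <= sqn x.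
Proof. exact: form_diag_ge0 ip_herm x. Qed.

Lemma hnorm_sqr x : hnorm ip x ^+ 2 = sqn x.
Proof. by rewrite /hnorm sqr_sqrtr // sqn_ge0. Qed.

Lemma hnorm_ge0 x : 0 <= hnorm ip x.
Proof. exact: sqrtr_ge0. Qed.

Lemma sqn_eq0 x : sqn x = 0 -> x = 0.
Proof. by case: hip => _ _ _ D h; apply: D; rewrite sqnE h. Qed.

Lemma hnorm_eq0 x : hnorm ip x = 0 -> x = 0.
Proof. by move=> h; apply: sqn_eq0; rewrite -hnorm_sqr h expr0n. Qed.

Lemma hnorm0 : hnorm ip 0 = 0.
Proof. by rewrite /hnorm (form0l ip_herm) sqrtr0. Qed.

Lemma sqnD x y : sqn (x + y) = sqn x + sqn y + 2 * cRe (ip x y).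
Proof.
rewrite {1}/sqn !(formDl ip_herm) !(formDr ip_herm) (formC ip_herm x y).
rewrite (sqnE x) (sqnE y).
by move: (sqn x) (sqn y) (ip x y) => a b [p q]; simpc => /=; ring.
Qed.

Lemma sqnZ a x : sqn (a *: x) = modc2 a * sqn x.
Proof.
rewrite {1}/sqn (formZl ip_herm) (formZr ip_herm) (sqnE x).
by move: (sqn x) a => b [p q]; rewrite /modc2; simpc => /=; ring.
Qed.

Lemma sqnN x : sqn (- x) = sqn x.
Proof.
by rewrite -scaleN1r sqnZ /modc2 /= oppr0 expr0n /= addr0 sqrrN expr1n mul1r.
Qed.

Lemma normc_ip u v : Normc.normc (ip u v) <= hnorm ip u * hnorm ip v.
Proof.
rewrite normcE /hnorm -sqrtrM ?sqn_ge0 // ler_sqrt ?mulr_ge0 ?sqn_ge0 //.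
exact: form_CS ip_herm u v.
Qed.

Lemma Re_ip_le u v : cRe (ip u v) <= hnorm ip u * hnorm ip v.
Proof. exact: le_trans (Re_le_normc _) (normc_ip u v). Qed.

Lemma hnormD x y : hnorm ip (x + y) <= hnorm ip x + hnorm ip y.
Proof.
have h : sqn (x + y) <= (hnorm ip x + hnorm ip y) ^+ 2.
  by rewrite sqnD sqrrD !hnorm_sqr; have := Re_ip_le x y; lra.
rewrite {1}/hnorm -(ger0_norm (addr_ge0 (hnorm_ge0 x) (hnorm_ge0 y))) -sqrtr_sqr.
by rewrite ler_sqrt // sqr_ge0.
Qed.

Lemma hnormZ a x : hnorm ip (a *: x) = Normc.normc a * hnorm ip x.
Proof. by rewrite /hnorm -/(sqn _) sqnZ sqrtrM ?modc2_ge0 // normcE. Qed.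

Lemma hnormB x y : hnorm ip (x - y) = hnorm ip (y - x).
Proof. by rewrite -opprB /hnorm -/(sqn (- _)) sqnN. Qed.

Lemma hnorm_le_of_sqn u v k : 0 <= k -> sqn u <= k ^+ 2 * sqn v ->
  hnorm ip u <= k * hnorm ip v.
Proof.
move=> hk h; rewrite /hnorm -(ger0_norm hk) -sqrtr_sqr -sqrtrM ?sqr_ge0 //.
by rewrite ler_sqrt // mulr_ge0 ?sqr_ge0 ?sqn_ge0.
Qed.

Definition linear_op (T : V -> V) :=
  forall (a : R[i]) x y, T (a *: x + y) = a *: T x + T y.

Section LinearOp.
Variable T : V -> V.
Hypothesis hT : linear_op T.

Lemma lin0 : T 0 = 0.
Proof.
have := hT 1 0 0; rewrite !scale1r addr0 => h.
by apply: (addrI (T 0)); rewrite addr0 -h.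
Qed.

Lemma linD x y : T (x + y) = T x + T y.
Proof. by rewrite -{1}[x]scale1r hT scale1r. Qed.

Lemma linZ a x : T (a *: x) = a *: T x.
Proof. by rewrite -[a *: x]addr0 hT lin0 addr0. Qed.

Lemma linB x y : T (x - y) = T x - T y.
Proof. by rewrite linD -scaleN1r linZ scaleN1r. Qed.

End LinearOp.

Definition positive_op (T : V -> V) := linear_op T /\ forall x, 0 <= ip (T x) x.

Lemma positive_diag_ge0 T x : positive_op T -> 0 <= cRe (ip (T x) x).
Proof. by case=> _ /(_ x); rewrite lecE => /andP[]. Qed.

(* A positive operator is self-adjoint: the imaginary parts of
   <T(x + c y), x + c y> vanish for c = 1 and c = i. *)
Lemma positive_selfadjoint T : positive_op T -> forall x y, ip (T x) y = ip x (T y).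
Proof.
case=> hl hp x y.
have real z : ip (T z) z = (cRe (ip (T z) z))%:C.
  by case: (ge0_complex_real (hp z)).
have E c : ip (T (x + c *: y)) (x + c *: y) = ip (T x) x + c^* * ip (T x) y
    + c * ip (T y) x + c * c^* * ip (T y) y.
  rewrite (linD hl) (linZ hl) !(formDl ip_herm) !(formDr ip_herm).
  by rewrite !(formZl ip_herm) !(formZr ip_herm); ring.
have Im0 c : cIm (ip (T x) x + c^* * ip (T x) y + c * ip (T y) x
    + c * c^* * ip (T y) y) = 0 by rewrite -E; exact: ger0_Im (hp _).
have := Im0 (1 +i* 0); have := Im0 (0 +i* 1).
rewrite (real x) (real y) (formC ip_herm (T y) x).
move: (ip (T x) y) (ip (T y) x) (cRe (ip (T x) x)) (cRe (ip (T y) y)).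
move=> [p q] [p' q'] a b; simpc => /= i1 i2.
by apply/eqP; rewrite eq_complex /=; apply/andP; split; apply/eqP; lra.
Qed.

Lemma positive_form T : positive_op T -> hermitian_form (fun x y => ip (T x) y).
Proof.
move=> hT; case: (hT) => hl hp; split => //.
- by move=> a x y z; rewrite hl (formDl ip_herm) (formZl ip_herm).
- by move=> x y; rewrite (positive_selfadjoint hT) (formC ip_herm).
Qed.

Definition bounded_by (T : V -> V) (M : R) :=
  0 <= M /\ forall x, hnorm ip (T x) <= M * hnorm ip x.

Lemma bounded_opP T : is_bounded_op ip T -> linear_op T /\ exists M, bounded_by T M.
Proof.
case=> hl [M hM]; split => //; exists (Num.max M 0); split => [|x].
  by rewrite le_max lexx orbT.
apply: le_trans (hM x) _; rewrite ler_wpM2r ?hnorm_ge0 //.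
by rewrite le_max lexx.
Qed.

Lemma bounded_byD S T M N : bounded_by S M -> bounded_by T N ->
  bounded_by (fun x => S x + T x) (M + N).
Proof.
case=> M0 hS [N0 hT]; split => [|x]; first exact: addr_ge0.
by apply: le_trans (hnormD _ _) _; rewrite mulrDl lerD.
Qed.

Lemma bounded_byZ c T M : bounded_by T M ->
  bounded_by (fun x => c *: T x) (Normc.normc c * M).
Proof.
case=> M0 hT; split => [|x]; first by rewrite mulr_ge0 ?normc_ge0.
by rewrite hnormZ -mulrA ler_wpM2l ?normc_ge0.
Qed.

Lemma bounded_by_comp S T M N : bounded_by S M -> bounded_by T N ->
  bounded_by (fun x => S (T x)) (M * N).
Proof.
case=> M0 hS [N0 hT]; split => [|x]; first exact: mulr_ge0.
by apply: le_trans (hS _) _; rewrite -mulrA ler_wpM2l.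
Qed.

Section PositiveBounded.
Variables (T : V -> V) (M : R).
Hypotheses (hT : positive_op T) (hM : bounded_by T M).

Lemma bounded_diag_le x : cRe (ip (T x) x) <= M * sqn x.
Proof.
apply: le_trans (Re_ip_le _ _) _.
rewrite -hnorm_sqr expr2 mulrA ler_wpM2r ?hnorm_ge0 //; exact: hM.2.
Qed.

(* ||Tx||^2 <= M <Tx,x>, by Cauchy-Schwarz for the form <T.,.>. *)
Lemma positive_sqn_le x : sqn (T x) <= M * cRe (ip (T x) x).
Proof.
have hc := form_CS (positive_form hT) x (T x).
rewrite /= sqnE modc2_real in hc.
have h2 : sqn (T x) ^+ 2 <= cRe (ip (T x) x) * (M * sqn (T x)).
  apply: le_trans hc _; rewrite ler_wpM2l ?positive_diag_ge0 //.
  exact: bounded_diag_le.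
apply: le_of_sqr_le_mul (sqn_ge0 _) _ _.
  by rewrite mulr_ge0 ?positive_diag_ge0 //; case: hM.
have -> : M * cRe (ip (T x) x) * sqn (T x) = cRe (ip (T x) x) * (M * sqn (T x)).
  by ring.
exact: h2.
Qed.

End PositiveBounded.

Section ShiftInverse.
Variables (P : V -> V) (M eps : R).
Hypotheses (hP : positive_op P) (hM : bounded_by P M) (he : 0 < eps).

Definition Peps x := P x + eps%:C *: x.

Lemma Peps_lin : linear_op Peps.
Proof.
move=> a x y; rewrite /Peps hP.1 !scalerDr !scalerA [eps%:C * a]mulrC.
by rewrite addrACA.
Qed.

Lemma Re_Peps z : cRe (ip (Peps z) z) = cRe (ip (P z) z) + eps * sqn z.
Proof. by rewrite /Peps (formDl ip_herm) (formZl ip_herm) ReD sqnE Re_realM. Qed.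

Lemma Peps_pos : positive_op Peps.
Proof.
split=> [|x]; first exact: Peps_lin.
rewrite /Peps (formDl ip_herm) (formZl ip_herm); apply: addr_ge0; first exact: hP.2.
by apply: mulr_ge0; [rewrite ler0c ltW | case: hip].
Qed.

Lemma Peps_sa x y : ip (Peps x) y = ip x (Peps y).
Proof. exact: positive_selfadjoint Peps_pos x y. Qed.

Lemma sqn_le_Peps x : sqn (P x) <= sqn (Peps x).
Proof.
rewrite /Peps sqnD sqnZ modc2_real (formZr ip_herm) Re_conj_realM.
have := positive_diag_ge0 x hP; have := sqn_ge0 x.
have : 0 <= eps ^+ 2 * sqn x by rewrite mulr_ge0 ?sqr_ge0 ?sqn_ge0.
have : 0 <= eps * cRe (ip (P x) x) by rewrite mulr_ge0 ?positive_diag_ge0 // ltW.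
lra.
Qed.

(* The iteration x -> x + (y - (P+eps)x)/c with c = M + eps contracts the
   residual by the factor q = M/c < 1. *)
Let c := M + eps.
Let q := M / c.

Lemma M_ge0 : 0 <= M. Proof. by case: hM. Qed.
Lemma c_gt0 : 0 < c. Proof. by rewrite /c; have := M_ge0; have := he; lra. Qed.
Lemma q_ge0 : 0 <= q. Proof. by rewrite /q divr_ge0 ?M_ge0 // ltW ?c_gt0. Qed.
Lemma q_lt1 : q < 1.
Proof. by rewrite /q ltr_pdivrMr ?c_gt0 // mul1r /c; have := he; lra. Qed.

Lemma Peps_hnorm v : hnorm ip (Peps v) <= c * hnorm ip v.
Proof.
apply: le_trans (hnormD _ _) _.
rewrite hnormZ normc_real ger0_norm; last exact: ltW.
by rewrite /c mulrDl lerD2r hM.2.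
Qed.

(* ||e - (P+eps)e/c||^2 = ||(M - P)e||^2/c^2 <= M^2||e||^2/c^2, because
   ||Pe||^2 <= M <Pe,e>. *)
Lemma residual_contraction e : sqn (e - (c^-1)%:C *: Peps e) <= q ^+ 2 * sqn e.
Proof.
have cn0 : c != 0 by rewrite gt_eqF ?c_gt0.
have -> : e - (c^-1)%:C *: Peps e = (c^-1)%:C *: (M%:C *: e - P e).
  rewrite /Peps scalerDr scalerBr !scalerA -!rmorphM /=.
  have -> : c^-1 * M = 1 - c^-1 * eps by rewrite /c; field.
  by rewrite rmorphB /= rmorph1 scalerBl scale1r opprD addrA addrAC.
rewrite sqnZ modc2_real sqnD sqnZ modc2_real sqnN (formNr ip_herm) (formZl ip_herm).
rewrite ReN Re_realM (formC ip_herm (P e) e) ReJ.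
have h1 := positive_sqn_le hP hM e.
have h2 : 0 <= M * cRe (ip (P e) e) by rewrite mulr_ge0 ?M_ge0 ?positive_diag_ge0.
have -> : q ^+ 2 * sqn e = c^-1 ^+ 2 * (M ^+ 2 * sqn e) by rewrite /q; ring.
rewrite ler_wpM2l ?sqr_ge0 //; lra.
Qed.

Definition approx_step y x := x + (c^-1)%:C *: (y - Peps x).
Definition approx y n := iter n (approx_step y) 0.
Definition residual y n := y - Peps (approx y n).

Lemma residual_succ y n :
  residual y n.+1 = residual y n - (c^-1)%:C *: Peps (residual y n).
Proof.
rewrite /residual /approx iterS -/(approx y n) /approx_step (linD Peps_lin).
by rewrite (linZ Peps_lin) -/(residual y n) opprD addrA.
Qed.

Lemma residual_hnorm y n : hnorm ip (residual y n) <= q ^+ n * hnorm ip y.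
Proof.
apply: hnorm_le_of_sqn; first by rewrite exprn_ge0 ?q_ge0.
elim: n => [|n IH].
  by rewrite /residual /approx /= (lin0 Peps_lin) subr0 expr0 expr1n mul1r.
rewrite residual_succ; apply: le_trans (residual_contraction _) _.
have -> : (q ^+ n.+1) ^+ 2 * sqn y = q ^+ 2 * ((q ^+ n) ^+ 2 * sqn y).
  by rewrite mulrA -exprMn -exprS.
by rewrite ler_wpM2l ?sqr_ge0.
Qed.

Lemma approx_dist y n m : (n <= m)%N ->
  hnorm ip (approx y m - approx y n) <= c^-1 * hnorm ip y / (1 - q) * q ^+ n.
Proof.
move=> /subnKC <-; set K := c^-1 * hnorm ip y / (1 - q).
have q1 : 0 < 1 - q by have := q_lt1; lra.
suff tele k : hnorm ip (approx y (n + k) - approx y n) <= K * (q ^+ n - q ^+ (n + k)).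
  apply: le_trans (tele _) _; rewrite ler_wpM2l ?gerDl ?oppr_le0 ?exprn_ge0 ?q_ge0 //.
  by rewrite /K !mulr_ge0 ?invr_ge0 ?hnorm_ge0 // ltW ?c_gt0.
elim: k => [|k IH]; first by rewrite addn0 !subrr hnorm0 mulr0.
have -> : approx y (n + k.+1) - approx y n
    = (approx y (n + k) - approx y n) + (c^-1)%:C *: residual y (n + k).
  by rewrite addnS /approx iterS -/(approx y (n + k)) /approx_step addrAC.
apply: le_trans (hnormD _ _) _.
have c0 : 0 <= c^-1 by rewrite invr_ge0 ltW ?c_gt0.
rewrite hnormZ normc_real ger0_norm //.
have h := ler_wpM2l c0 (residual_hnorm y (n + k)).
apply: le_trans (lerD IH h) _; rewrite le_eqVlt; apply/orP; left; apply/eqP.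
rewrite /K addnS exprS; field.
by rewrite (gt_eqF q1) (gt_eqF c_gt0).
Qed.

Hypothesis hcomp : is_complete ip.

Lemma approx_cauchy y : forall e : R, 0 < e -> exists N : nat, forall m n : nat,
  (N <= m)%N -> (N <= n)%N -> hnorm ip (approx y m - approx y n) < e.
Proof.
move=> e e0; set K := c^-1 * hnorm ip y / (1 - q).
have q1 : 0 < 1 - q by have := q_lt1; lra.
have K0 : 0 <= K by rewrite /K !mulr_ge0 ?invr_ge0 ?hnorm_ge0 // ltW ?c_gt0.
have d0 : 0 < e / (2 * (K + 1)) by rewrite divr_gt0 // mulr_gt0 //; lra.
have [N hN] := geometric_small q_ge0 q_lt1 d0.
exists N => m n hm hn.
have -> : approx y m - approx y n
    = (approx y m - approx y N) + (approx y N - approx y n) by rewrite addrA subrK.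
apply: le_lt_trans (hnormD _ _) _; rewrite (hnormB (approx y N)).
have b1 := approx_dist y hm; have b2 := approx_dist y hn; rewrite -/K in b1 b2.
have hKq : K * q ^+ N <= K * (e / (2 * (K + 1))).
  by rewrite ler_wpM2l // ltW // hN.
have hfrac : K * (e / (2 * (K + 1))) < e / 2.
  rewrite mulrA ltr_pdivrMr ?mulr_gt0 //; last by lra.
  rewrite (_ : e / 2 * (2 * (K + 1)) = K * e + e); first by lra.
  by field; rewrite ?pnatr_eq0.
lra.
Qed.

(* Completeness makes P + eps surjective: its preimage of y is the limit
   of the approximations. *)
Lemma Peps_surj y : exists l, Peps l = y.
Proof.
have [l hl] := hcomp (approx_cauchy y); exists l.
apply/eqP; rewrite eq_sym -subr_eq0; apply/eqP; apply: hnorm_eq0.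
apply/le_anti; rewrite hnorm_ge0 andbT; apply/ler_addgt0Pr => d d0; rewrite add0r.
have hy := hnorm_ge0 y.
have d1 : 0 < d / (2 * (hnorm ip y + 1)) by rewrite divr_gt0 // mulr_gt0 //; lra.
have [N1 hN1] := geometric_small q_ge0 q_lt1 d1.
have [N2 hN2] := hl _ (divr_gt0 d0 (mulr_gt0 (ltr0Sn _ 1) c_gt0)).
set n := maxn N1 N2.
have -> : y - Peps l = residual y n + Peps (approx y n - l).
  by rewrite /residual (linB Peps_lin) addrA subrK.
apply: le_trans (hnormD _ _) _.
have a1 : hnorm ip (residual y n) <= d / 2.
  apply: le_trans (residual_hnorm y n) _.
  apply: le_trans (_ : _ <= d / (2 * (hnorm ip y + 1)) * hnorm ip y) _.
    by rewrite ler_wpM2r // ltW // hN1 ?leq_maxl.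
  rewrite mulrAC ler_pdivrMr ?mulr_gt0 //; last by lra.
  rewrite (_ : d / 2 * (2 * (hnorm ip y + 1)) = d * hnorm ip y + d); first by lra.
  by field; rewrite ?pnatr_eq0.
have a2 : hnorm ip (Peps (approx y n - l)) <= d / 2.
  apply: le_trans (Peps_hnorm _) _.
  apply: le_trans (_ : _ <= c * (d / (2 * c))) _.
    by rewrite ler_wpM2l ?(ltW c_gt0) // ltW // hN2 // leq_maxr.
  by rewrite le_eqVlt; apply/orP; left; apply/eqP; field; rewrite gt_eqF ?c_gt0.
lra.
Qed.

Definition Peps_inv y := projT1 (cid (Peps_surj y)).

Lemma Peps_invK y : Peps (Peps_inv y) = y.
Proof. exact: projT2 (cid (Peps_surj y)). Qed.

Lemma Peps_inv_sa u v : ip (Peps_inv u) v = ip u (Peps_inv v).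
Proof. by rewrite -{1}(Peps_invK v) -Peps_sa Peps_invK. Qed.

Lemma Peps_inv_pos u : 0 <= ip (Peps_inv u) u.
Proof. by rewrite -{2}(Peps_invK u) -Peps_sa; exact: Peps_pos.2. Qed.

End ShiftInverse.

Lemma sqn_reflect b e : sqn e = 1 -> sqn ((2 * ip b e) *: e - b) = sqn b.
Proof.
move=> he; rewrite sqnD sqnZ sqnN (formNr ip_herm) (formZl ip_herm) he mulr1.
rewrite (formC ip_herm b e).
by move: (sqn b) (ip b e) => nb [p q]; rewrite /modc2; simpc => /=; ring.
Qed.

Lemma buzano a b e : sqn e = 1 ->
  2 * Normc.normc (ip a e * ip e b) <= hnorm ip a * hnorm ip b + Normc.normc (ip a b).
Proof.
move=> he; set u := (2 * ip b e) *: e - b.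
have eu : ip a u + ip a b = 2 * (ip a e * ip e b).
  rewrite /u (formBr ip_herm) (formZr ip_herm) subrK (formC ip_herm e b).
  by case: (ip e b) (ip a e) => p q [s t]; simpc; congr (_ +i* _); ring.
have h1 : Normc.normc (ip a u) <= hnorm ip a * hnorm ip b.
  by apply: le_trans (normc_ip _ _) _; rewrite /hnorm -/(sqn u) sqn_reflect.
have h2 := le_normcD (ip a u) (ip a b); rewrite eu Normc.normcM in h2.
have n2 : Normc.normc (2 : R[i]) = 2.
  by have := normcMn (1 : Rcomplex R) 2; rewrite Normc.normc1.
by rewrite n2 in h2; lra.
Qed.

(* For positive P, Q and a unit vector x, Buzano's inequality with a = Px,
   b = Qx and the AM-GM inequality give
   2 <Px,x><Qx,x> <= ||(P^2+Q^2)x||/2 + |<PQx,x>|. *)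
Lemma buzano_positive P Q x : positive_op P -> positive_op Q -> hnorm ip x = 1 ->
  2 * (cRe (ip (P x) x) * cRe (ip (Q x) x))
    <= hnorm ip (P (P x) + Q (Q x)) / 2 + Normc.normc (ip (P (Q x)) x).
Proof.
move=> hP hQ hx.
have sx : sqn x = 1 by rewrite -hnorm_sqr hx expr1n.
set a := cRe (ip (P x) x); set b := cRe (ip (Q x) x).
have [Pr a0] := ge0_complex_real (hP.2 x); have [Qr b0] := ge0_complex_real (hQ.2 x).
have h1 : 2 * (a * b) <= hnorm ip (P x) * hnorm ip (Q x) + Normc.normc (ip (P x) (Q x)).
  have := buzano (P x) (Q x) sx.
  rewrite (formC ip_herm (Q x) x) Pr Qr conjc_real -rmorphM normcE modc2_real.
  by rewrite sqrtr_sqr ger0_norm ?mulr_ge0.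
have h2 : hnorm ip (P x) * hnorm ip (Q x) <= (sqn (P x) + sqn (Q x)) / 2.
  rewrite -!hnorm_sqr.
  by have := sqr_ge0 (hnorm ip (P x) - hnorm ip (Q x)); rewrite sqrrB; lra.
have h3 : sqn (P x) + sqn (Q x) <= hnorm ip (P (P x) + Q (Q x)).
  have -> : sqn (P x) + sqn (Q x) = cRe (ip (P (P x) + Q (Q x)) x).
    rewrite (formDl ip_herm) ReD /sqn.
    by rewrite (positive_selfadjoint hP (P x) x) (positive_selfadjoint hQ (Q x) x).
  by apply: le_trans (Re_ip_le _ _) _; rewrite hx mulr1.
have h4 : Normc.normc (ip (P x) (Q x)) = Normc.normc (ip (P (Q x)) x).
  by rewrite (positive_selfadjoint hP x) (formC ip_herm (P (Q x))) normcJ.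
by rewrite -h4; lra.
Qed.

Section MixedSchwarz.
Hypothesis hcomp : is_complete ip.
Variables (A Aadj P Q : V -> V) (MP MQ : R).
Hypotheses (hadj : forall x y, ip (A x) y = ip x (Aadj y))
  (hP : positive_op P) (hQ : positive_op Q)
  (hMP : bounded_by P MP) (hMQ : bounded_by Q MQ)
  (hPP : forall x, P (P x) = Aadj (A x)) (hQQ : forall x, Q (Q x) = A (Aadj x)).

Lemma sqn_A w : sqn (A w) = sqn (P w).
Proof. by rewrite /sqn hadj -hPP -(positive_selfadjoint hP). Qed.

Lemma sqn_Aadj w : sqn (Aadj w) = sqn (Q w).
Proof. by rewrite /sqn -hadj -hQQ (positive_selfadjoint hQ). Qed.

Section Regularized.
Variable eps : R.
Hypothesis he : 0 < eps.

Let Pi := Peps_inv hP hMP he hcomp.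
Let Qi := Peps_inv hQ hMQ he hcomp.

Lemma sqn_QiA_le x : sqn (Qi (A x)) <= sqn x.
Proof.
set v := Qi (A x); set w := Qi v.
have e : ip v v = ip x (Aadj w) by rewrite {1}/v /Qi Peps_inv_sa hadj.
apply: le_of_sqr_le_mul; rewrite ?sqn_ge0 //.
apply: le_trans (_ : _ <= sqn x * sqn (Aadj w)) _.
  by rewrite /sqn e; apply: le_trans (Re_sqr_le_modc2 _) (form_CS ip_herm _ _).
rewrite ler_wpM2l ?sqn_ge0 // sqn_Aadj.
have -> : v = Peps Q eps w by rewrite /w /Qi Peps_invK.
exact: sqn_le_Peps.
Qed.

Lemma sqn_PiAadj_le y : sqn (Pi (Aadj y)) <= sqn y.
Proof.
set v := Pi (Aadj y); set w := Pi v.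
have e : ip v v = (ip (A w) y)^*.
  by rewrite {1}/v /Pi Peps_inv_sa (formC ip_herm w) -hadj.
apply: le_of_sqr_le_mul; rewrite ?sqn_ge0 //.
apply: le_trans (_ : _ <= sqn (A w) * sqn y) _.
  by rewrite /sqn e ReJ; apply: le_trans (Re_sqr_le_modc2 _) (form_CS ip_herm _ _).
rewrite mulrC ler_wpM2l ?sqn_ge0 // sqn_A.
have -> : v = Peps P eps w by rewrite /w /Pi Peps_invK.
exact: sqn_le_Peps.
Qed.

Definition reid_op x := Pi (Aadj (Qi (A x))).

Lemma reid_op_iter_le k x : sqn (iter k reid_op x) <= sqn x.
Proof.
elim: k => [//|k IH]; rewrite iterS.
exact: le_trans (sqn_PiAadj_le _) (le_trans (sqn_QiA_le _) IH).
Qed.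

Let F x y := ip (Peps P eps x) y.

Lemma reid_op_sym x y : F (reid_op x) y = F x (reid_op y).
Proof.
rewrite /F (Peps_sa hP he x) /reid_op /Pi !Peps_invK -hadj /Qi -Peps_inv_sa.
by rewrite (formC ip_herm y) -hadj (formC ip_herm (A y)).
Qed.

Lemma reid_op_diag x : cRe (F (reid_op x) x) = cRe (ip (Qi (A x)) (A x)).
Proof.
by rewrite /F /reid_op /Pi Peps_invK (formC ip_herm x) ReJ -hadj (formC ip_herm (A x)) ReJ.
Qed.

Lemma QiA_diag_le x : cRe (ip (Qi (A x)) (A x)) <= cRe (ip (P x) x) + eps * sqn x.
Proof.
rewrite -reid_op_diag -Re_Peps.
apply: (reid (positive_form (Peps_pos hP he)) reid_op_sym (B := (MP + eps) * sqn x)).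
  by rewrite reid_op_diag; have := Peps_inv_pos hQ hMQ he hcomp (A x); rewrite lecE => /andP[].
move=> k; rewrite /= Re_Peps mulrDl.
have h1 := bounded_diag_le hMP (iter k reid_op x).
have h2 := reid_op_iter_le k x.
apply: lerD; first by apply: le_trans h1 _; rewrite ler_wpM2l //; case: hMP.
by rewrite ler_wpM2l // ltW.
Qed.

(* Cauchy-Schwarz for <(Q+eps).,.> applied to Ax = (Q+eps)(Q+eps)^{-1}Ax. *)
Lemma mixed_schwarz_eps x y : modc2 (ip (A x) y) <=
  (cRe (ip (P x) x) + eps * sqn x) * (cRe (ip (Q y) y) + eps * sqn y).
Proof.
have e : A x = Peps Q eps (Qi (A x)) by rewrite /Qi Peps_invK.
rewrite e; apply: le_trans (form_CS (positive_form (Peps_pos hQ he)) _ _) _.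
rewrite /= (Re_Peps Q eps y) ler_wpM2r //.
  by rewrite addr_ge0 ?mulr_ge0 ?sqn_ge0 ?positive_diag_ge0 // ltW.
by rewrite -e (formC ip_herm) ReJ; exact: QiA_diag_le.
Qed.

End Regularized.

Lemma mixed_schwarz x y : modc2 (ip (A x) y) <= cRe (ip (P x) x) * cRe (ip (Q y) y).
Proof.
apply: (le_mul_of_eps (n1 := sqn x) (n2 := sqn y)) => [||||e he].
- exact: positive_diag_ge0 x hP.
- exact: positive_diag_ge0 y hQ.
- exact: sqn_ge0.
- exact: sqn_ge0.
- exact: mixed_schwarz_eps.
Qed.

Lemma unit_vector_estimate x : hnorm ip x = 1 ->
  Normc.normc (ip (A x) x) ^+ 2 <= modc2 (ip (P x + 'i *: Q x) x) / 4
    + hnorm ip (P (P x) + Q (Q x)) / 8 + Normc.normc (ip (P (Q x)) x) / 4.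
Proof.
move=> hx; set a := cRe (ip (P x) x); set b := cRe (ip (Q x) x).
have Pr : ip (P x) x = a%:C by case: (ge0_complex_real (hP.2 x)).
have Qr : ip (Q x) x = b%:C by case: (ge0_complex_real (hQ.2 x)).
have h1 : Normc.normc (ip (A x) x) ^+ 2 <= a * b.
  by rewrite normc_sqr; exact: mixed_schwarz.
have h2 : modc2 (ip (P x + 'i *: Q x) x) = a ^+ 2 + b ^+ 2.
  by rewrite (formDl ip_herm) (formZl ip_herm) Pr Qr /modc2; simpc => /=; ring.
have h3 := buzano_positive hP hQ hx.
have := sqr_ge0 (a - b); rewrite sqrrB h2 -/a -/b; lra.
Qed.

End MixedSchwarz.

Lemma numrad_elem T M x : bounded_by T M -> hnorm ip x = 1 ->
  Normc.normc (ip (T x) x) <= numrad ip T.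
Proof.
move=> [_ hM] hx; apply: ub_le_sup; last by exists x.
exists M => _ [y [hy ->]]; apply: le_trans (normc_ip _ _) _.
by rewrite hy mulr1; apply: le_trans (hM y) _; rewrite hy mulr1.
Qed.

Lemma numrad_no_unit T : ~ (exists x, hnorm ip x = 1) -> numrad ip T = 0.
Proof.
move=> nox; rewrite /numrad.
have -> : ([set r : R | exists x : V, hnorm ip x = 1 /\
    r = Normc.normc (ip (T x) x)] = set0)%classic.
  by apply/seteqP; split => r // [x [hx _]]; apply: nox; exists x.
exact: sup0.
Qed.

Lemma numrad_ge0 T M : bounded_by T M -> 0 <= numrad ip T.
Proof.
move=> hM; have [[x hx]|nox] := pselect (exists x, hnorm ip x = 1).
  exact: le_trans (normc_ge0 _) (numrad_elem hM hx).
by rewrite numrad_no_unit.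
Qed.

Lemma numrad_sqr_le T M r : bounded_by T M -> 0 <= r ->
  (forall x, hnorm ip x = 1 -> Normc.normc (ip (T x) x) ^+ 2 <= r) ->
  numrad ip T ^+ 2 <= r.
Proof.
move=> hM r0 H; rewrite -(sqr_sqrtr r0) ler_sqr ?nnegrE ?sqrtr_ge0 ?(numrad_ge0 hM) //.
have [[x0 hx0]|nox] := pselect (exists x, hnorm ip x = 1); last first.
  by rewrite numrad_no_unit ?sqrtr_ge0.
apply: ge_sup; first by exists (Normc.normc (ip (T x0) x0)), x0.
move=> _ [x [hx ->]].
by rewrite -(ger0_norm (normc_ge0 _)) -sqrtr_sqr ler_sqrt ?H.
Qed.

Lemma opnorm_elem T M x : bounded_by T M -> hnorm ip x <= 1 ->
  hnorm ip (T x) <= opnorm ip T.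
Proof.
move=> [M0 hM] hx; apply: ub_le_sup; last by exists x.
exists M => _ [y [hy ->]]; apply: le_trans (hM y) _.
by rewrite -[leRHS]mulr1 ler_wpM2l.
Qed.

Lemma opnorm_ge0 T M : bounded_by T M -> 0 <= opnorm ip T.
Proof.
move=> hM; apply: le_trans (opnorm_elem hM (x := 0) _); first exact: hnorm_ge0.
by rewrite hnorm0.
Qed.

End InnerProduct.

Unset Implicit Arguments.

Theorem mainTheorem1 (R : realType) (V : lmodType R[i]) (ip : V -> V -> R[i])
  (A Aadj P Q : V -> V) :
  is_hilbert ip ->
  is_bounded_op ip A ->
  is_adjoint ip A Aadj ->
  is_pos_sqrt ip P (fun x => Aadj (A x)) ->
  is_pos_sqrt ip Q (fun x => A (Aadj x)) ->
  numrad ip A ^+ 2 <=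
    numrad ip (fun x => P x + 'i *: Q x) ^+ 2 / 4%:R
    + opnorm ip (fun x => P (P x) + Q (Q x)) / 8%:R
    + numrad ip (fun x => P (Q x)) / 4%:R.
Proof.
move=> [hip hcomp] /(bounded_opP) [_ [MA hMA]] hadj [[hPb hPpos] hPP] [[hQb hQpos] hQQ].
have [hPl [MP hMP]] := bounded_opP hPb.
have [hQl [MQ hMQ]] := bounded_opP hQb.
have hP : positive_op ip P by [].
have hQ : positive_op ip Q by [].
have b1 := bounded_byD hip hMP (bounded_byZ hip 'i hMQ).
have b2 := bounded_byD hip (bounded_by_comp hMP hMP) (bounded_by_comp hMQ hMQ).
have b3 := bounded_by_comp hMP hMQ.
apply: (numrad_sqr_le hip hMA) => [|x hx].
  by rewrite !addr_ge0 ?divr_ge0 ?sqr_ge0 ?(numrad_ge0 hip b3) ?(opnorm_ge0 hip b2).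
apply: le_trans (unit_vector_estimate hip hcomp hadj hP hQ hMP hMQ hPP hQQ hx) _.
have x1 : hnorm ip x <= 1 by rewrite hx.
have c1 := numrad_elem hip b1 hx; have c2 := opnorm_elem b2 x1; have c3 := numrad_elem hip b3 hx.
rewrite -normc_sqr.
have : Normc.normc (ip (P x + 'i *: Q x) x) ^+ 2
    <= numrad ip (fun x => P x + 'i *: Q x) ^+ 2 by rewrite ler_sqr ?nnegrE ?normc_ge0 ?(numrad_ge0 hip b1).
lra.
Qed.
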